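(* Let $m\ge3$, $C$ a set of $m$ candidates, $T$ the set of all $m!$ strict rankings of $C$, $w=(w_1,\dots,w_m)$ with $1=w_1\ge\cdots\ge w_m=0$, and $\sigma_t(\alpha)=w_i$ where $i$ is the position of $\alpha$ in $t\in T$. Let $(N_t)_{t\in T}$ be nonnegative integers (numbers of voters of each type) and $|\alpha|=\sum_tN_t\sigma_t(\alpha)$. Suppose candidate $a$ satisfies $|a|>|\alpha|$ for all $\alpha\ne a$, and let $b$ be a candidate with the second-highest score, i.e. $|b|\ge|\alpha|$ for all $\alpha\ne a$. For $\beta\ne a$ let $Q_3(\beta)$ be the optimal value (or $+\infty$ if infeasible) of the linear program: minimize $\sum_{t\in\bar T_{\beta a}}x_t$ over real $x_t$ ($t\in\bar T_{\beta a}$), $y_t$ ($t\in T_\beta$) subject to $$\sum_{t\in T_\beta}y_t(1-\sigma_t(\alpha))-\sum_{t\in\bar T_{\beta a}}x_t(\sigma_t(\beta)-\sigma_t(\alpha))\ge|\alpha|-|\beta|\quad\forall\alpha\ne\beta,$$ $\sum_{t\in T_\beta}y_t=\sum_{t\in\bar T_{\beta a}}x_t$, $x_t\ge0$, $y_t\ge0$, where $\bar T_{\beta a}$ is the set of types ranking $\beta$ above $a$ and $T_\beta$ the set of types ranking $\beta$ first. Then $\min_{\beta\ne a}Q_3(\beta)=Q_3(b)$. *)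

From HB Require Import structures.
From mathcomp Require Import all_boot all_order all_algebra all_fingroup.
From mathcomp Require Import all_classical all_reals.
From mathcomp Require Import constructive_ereal ereal.
Set Implicit Arguments. Unset Strict Implicit. Unset Printing Implicit Defensive.
Import Order.TTheory GRing.Theory Num.Theory.
Local Open Scope ring_scope.

(* Candidates are 'I_m; a type (strict ranking) t : {perm 'I_m} sends a
   candidate to its position (0 = first).  Weights w : nat -> R, position i
   (0-indexed) gets weight w i. *)

Definition sigma (R : realType) (m : nat) (w : nat -> R)
  (t : {perm 'I_m}) (al : 'I_m) : R := w (t al).

Definition score (R : realType) (m : nat) (w : nat -> R)
  (N : {perm 'I_m} -> nat) (al : 'I_m) : R :=
  \sum_(t : {perm 'I_m}) (N t)%:R * sigma w t al.

Definition Tbar (m : nat) (be a : 'I_m) : pred {perm 'I_m} :=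
  fun t => (t be < t a)%N.
Definition Tfirst (m : nat) (be : 'I_m) : pred {perm 'I_m} :=
  fun t => (t be == 0 :> nat).

(* Feasibility of (x,y) for the linear program defining Q_3(beta).
   Only x_t for t in Tbar and y_t for t in Tfirst are variables; other
   coordinates are ignored. *)
Definition Q3_feasible (R : realType) (m : nat) (w : nat -> R)
  (N : {perm 'I_m} -> nat) (a be : 'I_m)
  (x y : {perm 'I_m} -> R) : Prop :=
  [/\ forall al : 'I_m, al != be ->
        \sum_(t | Tfirst be t) y t * (1 - sigma w t al)
        - \sum_(t | Tbar be a t) x t * (sigma w t be - sigma w t al)
        >= score w N al - score w N be,
      \sum_(t | Tfirst be t) y t = \sum_(t | Tbar be a t) x t,
      forall t, Tbar be a t -> 0 <= x t &
      forall t, Tfirst be t -> 0 <= y t].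

Definition Q3 (R : realType) (m : nat) (w : nat -> R)
  (N : {perm 'I_m} -> nat) (a be : 'I_m) : \bar R :=
  ereal_inf [set ((\sum_(t | Tbar be a t) x t)%:E) | x in
     [set x | exists y, Q3_feasible w N a be x y]]%classic.

(* Swapping the places of beta and b in every ranking fixes a and the
   objective, and transports a feasible point of the program for beta to
   one for b.  The constraint for alpha becomes the constraint for the
   swapped alpha with right-hand side |alpha| - |b| instead of
   |swap alpha| - |beta|, which is no larger as soon as |beta| <= |b|.
   Hence Q_3(b) <= Q_3(beta) for every beta != a. *)
From HB Require Import structures.
From mathcomp Require Import all_boot all_order all_algebra all_fingroup.
From mathcomp Require Import all_classical all_reals.
From mathcomp Require Import constructive_ereal ereal.
From mathcomp Require Import lra.
Import Order.TTheory GRing.Theory Num.Theory.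
Local Open Scope ring_scope.

Section Relabelling.
Context {R : realType} {m : nat} (w : nat -> R).
Implicit Types (p t : {perm 'I_m}) (c d : 'I_m).

Lemma sigma_permM p t c : sigma w (p * t)%g c = sigma w t (p c).
Proof. by rewrite /sigma permM. Qed.

Lemma Tbar_permM c d p t : Tbar c d (p * t)%g = Tbar (p c) (p d) t.
Proof. by rewrite /Tbar !permM. Qed.

Lemma Tfirst_permM c p t : Tfirst c (p * t)%g = Tfirst (p c) t.
Proof. by rewrite /Tfirst permM. Qed.

Lemma sum_perm_mulg p (P : pred {perm 'I_m}) (F : {perm 'I_m} -> R) :
  \sum_(t | P t) F t = \sum_(t | P (p * t)%g) F (p * t)%g.
Proof. exact: reindex_inj (mulgI p). Qed.

End Relabelling.

Section SwapTransport.
Context {R : realType} {m : nat} (w : nat -> R) (N : {perm 'I_m} -> nat).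
Context (a b be : 'I_m).
Hypotheses (hba : b != a) (hbea : be != a).
Hypothesis hscore : score w N be <= score w N b.

Let tau : {perm 'I_m} := tperm be b.

Lemma tperm_fix_a : tau a = a.
Proof. by rewrite tpermD // eq_sym. Qed.

Lemma Tbar_tperm t : Tbar b a (tau * t)%g = Tbar be a t.
Proof. by rewrite Tbar_permM tperm_fix_a tpermR. Qed.

Lemma Tfirst_tperm t : Tfirst b (tau * t)%g = Tfirst be t.
Proof. by rewrite Tfirst_permM tpermR. Qed.

Lemma sum_Tbar_tperm (F : {perm 'I_m} -> R) :
  \sum_(t | Tbar b a t) F t = \sum_(t | Tbar be a t) F (tau * t)%g.
Proof.
by rewrite (sum_perm_mulg tau); apply: eq_bigl => t; rewrite Tbar_tperm.
Qed.

Lemma sum_Tfirst_tperm (F : {perm 'I_m} -> R) :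
  \sum_(t | Tfirst b t) F t = \sum_(t | Tfirst be t) F (tau * t)%g.
Proof.
by rewrite (sum_perm_mulg tau); apply: eq_bigl => t; rewrite Tfirst_tperm.
Qed.

Lemma score_gap_tperm al :
  score w N al - score w N b <= score w N (tau al) - score w N be.
Proof.
have := hscore; rewrite /tau; case: tpermP => [h|h|_ _]; rewrite ?h; lra.
Qed.

Lemma Q3_feasible_tperm x y :
  Q3_feasible w N a be x y ->
  Q3_feasible w N a b (fun t => x (tau * t)%g) (fun t => y (tau * t)%g).
Proof.
have tauK := tpermKg be b; rewrite -/tau in tauK.
case=> hcons hbal hx hy; split.
- move=> al hal.
  have htau : tau al != be.
    apply: contra hal => /eqP htau.
    by rewrite -(tpermK be b al) -/tau htau tpermL.
  rewrite sum_Tfirst_tperm sum_Tbar_tperm.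
  under eq_bigr do rewrite tauK sigma_permM.
  under [X in _ <= _ - X]eq_bigr do rewrite tauK !sigma_permM tpermR.
  exact: le_trans (score_gap_tperm al) (hcons _ htau).
- rewrite sum_Tfirst_tperm sum_Tbar_tperm.
  by under eq_bigr do rewrite tauK; under [RHS]eq_bigr do rewrite tauK.
- by move=> t; rewrite -{1}[t]tauK Tbar_tperm => /hx.
- by move=> t; rewrite -{1}[t]tauK Tfirst_tperm => /hy.
Qed.

Lemma Q3_le_swap : (Q3 w N a b <= Q3 w N a be)%E.
Proof.
apply: le_ereal_inf => _ [x [y hxy] <-].
exists (fun t => x (tau * t)%g).
  by exists (fun t => y (tau * t)%g); exact: Q3_feasible_tperm.
by rewrite sum_Tbar_tperm; under eq_bigr do rewrite tpermKg.
Qed.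

End SwapTransport.

Theorem proposition7 (R : realType) (m : nat) (hm : (3 <= m)%N)
  (w : nat -> R)
  (hw1 : w 0%N = 1) (hwm : w m.-1 = 0)
  (hwdec : forall i j : nat, (i <= j)%N -> (j < m)%N -> w j <= w i)
  (N : {perm 'I_m} -> nat) (a b : 'I_m)
  (ha : forall al : 'I_m, al != a -> score w N al < score w N a)
  (hba : b != a)
  (hb : forall al : 'I_m, al != a -> score w N al <= score w N b) :
  (\big[Order.min/+oo%E]_(be : 'I_m | be != a) Q3 w N a be = Q3 w N a b)%E.
Proof.
rewrite (bigD1 b) //=; apply: min_l.
apply: (big_ind (fun v => (Q3 w N a b <= v)%E)) => [|u v hu hv|be /andP[hbea _]].
- exact: leey.
- by rewrite le_min hu hv.
- exact: Q3_le_swap (hb _ hbea).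
Qed.
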